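(* Let $q>1$. For every integer $N\ge1$, $$H_{N+1}(x;q)=\frac{[N+1]_q}{N+1}\Big\{[2]_q x H_N(x;q)-2[N]_qH_{N-1}(x;q)-(q-1)[2]_q[N]_q x^2H_{N-1}(x;q)+[2]_q[N]_q!\sum_{k=0}^{N-2}\frac{(1-q^2)^{N-k}x^{N-k+1}H_k(x;q)}{[k]_q!\,[N-k+1]_q}\Big\},$$ where the sum is empty when $N=1$.
   Context: For $n\ge 0$ let $[n]_q=\frac{q^n-1}{q-1}$, $[0]_q!=1$, $[n]_q!=[1]_q\cdots[n]_q$, and $e_q(z)=\sum_{n\ge0}z^n/[n]_q!$. The $q$-Hermite polynomials $H_N(x;q)$ are defined by the identity of formal power series in $t$: $e^{-t^2}e_q([2]_q t x)=\sum_{N\ge0}H_N(x;q)\,t^N/[N]_q!$. *)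

From HB Require Import structures.
From mathcomp Require Import all_boot all_order all_algebra.
Set Implicit Arguments. Unset Strict Implicit. Unset Printing Implicit Defensive.
Import Order.TTheory GRing.Theory Num.Theory.
Local Open Scope ring_scope.

Section QHermite.
Variable R : realFieldType.

Definition qint (q : R) (n : nat) : R := (q ^+ n - 1) / (q - 1).

Definition qfact (q : R) (n : nat) : R := \prod_(1 <= i < n.+1) qint q i.

(* Formal power series in t are represented by coefficient sequences nat -> R;
   the product of formal power series is the Cauchy product. *)
Definition fps_mul (a b : nat -> R) (n : nat) : R :=
  \sum_(i < n.+1) a i * b (n - i)%N.

(* coefficients of e^{-t^2} = sum_m (-1)^m t^(2m) / m! *)
Definition exp_mt2 (n : nat) : R :=
  if odd n then 0 else (-1) ^+ (n./2) / (n./2)`!%:R.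

(* coefficients of e_q(c t) = sum_n c^n t^n / [n]_q! *)
Definition eq_scaled (q c : R) (n : nat) : R := c ^+ n / qfact q n.

(* H_N(x;q) := [N]_q! * (coefficient of t^N in e^{-t^2} e_q([2]_q t x)) *)
Definition qHermite (q x : R) (N : nat) : R :=
  qfact q N * fps_mul exp_mt2 (eq_scaled q (qint q 2 * x)) N.

End QHermite.

(* Let h(t) = e^{-t^2} e_q(ct) with c = [2]_q x, so that H_N = [N]_q! h_N.  The
   Euler operator t d/dt acts by t d/dt e^{-t^2} = -2t^2 e^{-t^2} and, since
   e_q(qz) = (1 + (q-1)z) e_q(z), by t d/dt e_q(ct) = t e_q(ct) S(t) with
   S(t) = sum_j c^(j+1) (1-q)^j t^j / [j+1]_q.  Hence t h' = -2t^2 h + t h S;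
   comparing coefficients of t^(N+1) and splitting off the two lowest terms of S
   gives the recurrence. *)

From HB Require Import structures.
From mathcomp Require Import all_boot all_order all_algebra.
From mathcomp Require Import ring.
Import Order.TTheory GRing.Theory Num.Theory.
Local Open Scope ring_scope.

Set Implicit Arguments.
Unset Strict Implicit.
Unset Printing Implicit Defensive.

Section FormalPowerSeries.
Variable R : realFieldType.
Implicit Types (a b c : nat -> R) (r : R).

Definition fps_shift a n : R := if n is m.+1 then a m else 0.

Definition fps_euler a n : R := n%:R * a n.

Lemma eq_fps_mul a a' b b' n :
  (forall i, a i = a' i) -> (forall i, b i = b' i) ->
  fps_mul a b n = fps_mul a' b' n.
Proof. by move=> eqa eqb; apply: eq_bigr => i _; rewrite eqa eqb. Qed.

Lemma fps_mul_coefM a b m n : (m <= n)%N ->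
  fps_mul a b m = (\poly_(i < n.+1) a i * \poly_(i < n.+1) b i)`_m.
Proof.
move=> le_mn; rewrite coefM; apply: eq_bigr => i _; rewrite !coef_poly.
have -> : (i < n.+1)%N by rewrite (leq_trans (ltn_ord i)).
by rewrite ltnS (leq_trans (leq_subr _ _) le_mn).
Qed.

Lemma fps_mulC a b n : fps_mul a b n = fps_mul b a n.
Proof. by rewrite !(fps_mul_coefM _ _ (leqnn n)) mulrC. Qed.

Lemma fps_mulA a b c n :
  fps_mul (fps_mul a b) c n = fps_mul a (fps_mul b c) n.
Proof.
pose P (f : nat -> R) := \poly_(i < n.+1) f i.
have -> : fps_mul (fps_mul a b) c n = (P a * P b * P c)`_n.
  rewrite coefM; apply: eq_bigr => i _.
  by rewrite coef_poly ltnS leq_subr -(fps_mul_coefM _ _ (ltnSE (ltn_ord i))).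
have -> : fps_mul a (fps_mul b c) n = (P a * (P b * P c))`_n.
  rewrite coefM; apply: eq_bigr => i _.
  by rewrite coef_poly ltn_ord -(fps_mul_coefM _ _ (leq_subr i n)).
by rewrite mulrA.
Qed.

Lemma fps_mulZl r a b n :
  fps_mul (fun i => r * a i) b n = r * fps_mul a b n.
Proof. by rewrite /fps_mul mulr_sumr; apply: eq_bigr => i _; rewrite mulrA. Qed.

Lemma fps_mul_shiftr a b n : fps_mul a (fps_shift b) n.+1 = fps_mul a b n.
Proof.
rewrite /fps_mul big_ord_recr /= subnn mulr0 addr0.
by apply: eq_bigr => i _; rewrite subSn // -ltnS.
Qed.

Lemma fps_mul_shiftl a b n : fps_mul (fps_shift a) b n.+1 = fps_mul a b n.
Proof. by rewrite fps_mulC fps_mul_shiftr fps_mulC. Qed.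

Lemma fps_euler_mul a b n :
  fps_euler (fps_mul a b) n = fps_mul (fps_euler a) b n + fps_mul a (fps_euler b) n.
Proof.
rewrite /fps_euler /fps_mul mulr_sumr -big_split; apply: eq_bigr => i _ /=.
by rewrite -{1}(subnKC (ltnSE (ltn_ord i))) natrD; ring.
Qed.

Lemma fps_mul_geomS a r n :
  fps_mul a (fun j => r ^+ j) n.+1 = a n.+1 + r * fps_mul a (fun j => r ^+ j) n.
Proof.
rewrite /fps_mul big_ord_recr /= subnn mulr1 addrC mulr_sumr; congr (_ + _).
by apply: eq_bigr => i _; rewrite subSn ?exprS 1?mulrCA // -ltnS.
Qed.

Lemma fps_mul_recr2 a b n :
  fps_mul a b n.+1 = \sum_(k < n) a k * b (n.+1 - k)%N + a n * b 1%N + a n.+1 * b 0%N.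
Proof. by rewrite /fps_mul !big_ord_recr /= subnn subSnn. Qed.

Lemma exp_mt2_euler n :
  fps_euler (exp_mt2 R) n = fps_shift (fps_shift (fun i => -2 * exp_mt2 R i)) n.
Proof.
case: n => [|[|n]]; rewrite /fps_euler /= ?mul0r ?mulr0 //.
rewrite /exp_mt2 /= negbK; case: ifP => odd_n; first by rewrite !mulr0.
have -> : n.+2 = ((n./2).+1).*2.
  by rewrite -{1}(odd_double_half n) odd_n doubleS.
rewrite -muln2 factS !natrM exprS.
have nz_fact : (n./2)`!%:R != 0 :> R by rewrite pnatr_eq0 -lt0n fact_gt0.
by field; rewrite nz_fact addrC natr1 pnatr_eq0.
Qed.

End FormalPowerSeries.

Definition qexp_logder (R : realFieldType) (q c : R) (j : nat) : R :=
  c ^+ j.+1 * (1 - q) ^+ j / qint q j.+1.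

Section QExponential.
Variables (R : realFieldType) (q : R).
Hypotheses (q_gt0 : 0 < q) (q_neq1 : q != 1).

Lemma subq1_neq0 : q - 1 != 0.
Proof. by rewrite subr_eq0. Qed.

Lemma qintE n : qint q n * (q - 1) = q ^+ n - 1.
Proof. by rewrite /qint divfK ?subq1_neq0. Qed.

Lemma qexprE n : q ^+ n = qint q n * (q - 1) + 1.
Proof. by rewrite qintE subrK. Qed.

Lemma qint_neq0 n : (0 < n)%N -> qint q n != 0.
Proof.
move=> n_gt0; rewrite /qint mulf_neq0 ?invr_eq0 ?subq1_neq0 //.
by rewrite subr_eq0 pexpr_eq1 // ltW.
Qed.

Lemma qint1 : qint q 1 = 1.
Proof. by rewrite /qint expr1 divff ?subq1_neq0. Qed.

Lemma qint2 : qint q 2 = 1 + q.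
Proof. by apply: (mulIf subq1_neq0); rewrite qintE; ring. Qed.

Lemma qfact0 : qfact q 0 = 1.
Proof. by rewrite /qfact big_geq. Qed.

Lemma qfactS n : qfact q n.+1 = qfact q n * qint q n.+1.
Proof. by rewrite /qfact big_nat_recr. Qed.

Lemma qfact_neq0 n : qfact q n != 0.
Proof.
elim: n => [|n IHn]; first by rewrite qfact0 oner_eq0.
by rewrite qfactS mulf_neq0 ?qint_neq0.
Qed.

(* the coefficients of e_q(t) and of its logarithmic derivative *)
Let ec n : R := (qfact q n)^-1.
Let sc j : R := (1 - q) ^+ j / qint q j.+1.

(* Coefficientwise, e_q(qt) = (1 + (q-1)t) e_q(t) and
   q t S(qt) = t S(t) + (q-1) t / (1 - (1-q)t), where S = e_q'/e_q. *)
Lemma qexp_dilate m : q ^+ m * ec m = ec m + (q - 1) * fps_shift ec m.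
Proof.
case: m => [|m] /=; first by rewrite expr0 mul1r mulr0 addr0.
rewrite /ec qfactS invfM qexprE.
by field; rewrite qfact_neq0 qint_neq0 ?subq1_neq0.
Qed.

Lemma qexp_logder_dilate j : q ^+ j.+1 * sc j = sc j + (q - 1) * (1 - q) ^+ j.
Proof. by rewrite /sc qexprE; field; rewrite qint_neq0 ?subq1_neq0. Qed.

Lemma qexp_logder_conv_rec n :
  (q ^+ n.+2 - 1) * fps_mul ec sc n.+1 = (q - 1) * (ec n.+1 + fps_mul ec sc n).
Proof.
pose geo j : R := (1 - q) ^+ j.
have dilate : q ^+ n.+2 * fps_mul ec sc n.+1 =
    fps_mul (fun i => ec i + (q - 1) * fps_shift ec i)
            (fun j => sc j + (q - 1) * geo j) n.+1.
  rewrite /fps_mul mulr_sumr; apply: eq_bigr => i _.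
  have le_in : (i <= n.+1)%N := ltnSE (ltn_ord i).
  rewrite -qexp_dilate -qexp_logder_dilate -subSn //.
  by rewrite -{1}(subnKC (leqW le_in)) exprD; ring.
have expand : fps_mul (fun i => ec i + (q - 1) * fps_shift ec i)
                      (fun j => sc j + (q - 1) * geo j) n.+1 =
    fps_mul ec sc n.+1 + (q - 1) * (fps_mul (fps_shift ec) sc n.+1
      + (fps_mul ec geo n.+1 + (q - 1) * fps_mul (fps_shift ec) geo n.+1)).
  rewrite /fps_mul !mulr_sumr -!big_split mulr_sumr -big_split.
  by apply: eq_bigr => i _ /=; ring.
have geo_conv : fps_mul ec geo n.+1 + (q - 1) * fps_mul (fps_shift ec) geo n.+1 = ec n.+1.
  by rewrite fps_mul_shiftl fps_mul_geomS; ring.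
rewrite mulrBl dilate expand geo_conv fps_mul_shiftl; ring.
Qed.

Lemma qexp_logder_conv n : fps_mul ec sc n = n.+1%:R * ec n.+1.
Proof.
elim: n => [|n IHn].
  by rewrite /fps_mul big_ord1 /ec /sc /= qfactS qfact0 qint1 expr0 !(mul1r, invr1).
apply: (mulfI (qint_neq0 (ltn0Sn n.+1))); apply: (mulIf subq1_neq0).
rewrite [LHS]mulrAC qintE qexp_logder_conv_rec IHn /ec (qfactS n.+1).
by field; rewrite qfact_neq0 qint_neq0.
Qed.

Variable c : R.

Lemma eq_scaled_euler n :
  fps_euler (eq_scaled q c) n =
  fps_shift (fps_mul (eq_scaled q c) (qexp_logder q c)) n.
Proof.
case: n => [|n] /=; first by rewrite /fps_euler mul0r.
have -> : fps_mul (eq_scaled q c) (qexp_logder q c) n = c ^+ n.+1 * fps_mul ec sc n.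
  rewrite /fps_mul mulr_sumr; apply: eq_bigr => i _.
  have -> : c ^+ n.+1 = c ^+ i * c ^+ (n - i).+1.
    by rewrite -exprD addnS subnKC // -ltnS.
  by rewrite /eq_scaled /qexp_logder /ec /sc; ring.
by rewrite qexp_logder_conv /fps_euler /eq_scaled /ec; ring.
Qed.

Let g := fps_mul (exp_mt2 R) (eq_scaled q c).

Lemma exp_mt2_qexp_euler n :
  n.+2%:R * g n.+2 = -2 * g n + fps_mul g (qexp_logder q c) n.+1.
Proof.
rewrite -[LHS]/(fps_euler g n.+2) fps_euler_mul.
rewrite (eq_fps_mul n.+2 (@exp_mt2_euler R) (fun=> erefl)) 2!fps_mul_shiftl fps_mulZl.
by rewrite (eq_fps_mul n.+2 (fun=> erefl) eq_scaled_euler) fps_mul_shiftr fps_mulA.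
Qed.

End QExponential.

Section QHermiteRecurrence.
Variables (R : realFieldType) (q x : R).
Hypotheses (q_gt0 : 0 < q) (q_neq1 : q != 1).

Let g := fps_mul (exp_mt2 R) (eq_scaled q (qint q 2 * x)).

Lemma qHermiteE n : qHermite q x n = qfact q n * g n.
Proof. by []. Qed.

Lemma qexp_logder_qint2 j :
  qexp_logder q (qint q 2 * x) j =
  qint q 2 * ((1 - q ^+ 2) ^+ j * x ^+ j.+1 / qint q j.+1).
Proof.
have -> : 1 - q ^+ 2 = (1 - q) * qint q 2 by rewrite qint2 //; ring.
rewrite /qexp_logder; move: (qint q 2) => t.
by rewrite !exprMn exprS; ring.
Qed.

Lemma qHermite_tail_sum m n :
  \sum_(0 <= k < m)
     ((1 - q ^+ 2) ^+ (n - k) * x ^+ (n - k).+1 * qHermite q x k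
      / (qfact q k * qint q (n - k).+1)) =
  (qint q 2)^-1 * \sum_(k < m) g k * qexp_logder q (qint q 2 * x) (n - k).
Proof.
rewrite big_mkord mulr_sumr; apply: eq_bigr => k _.
rewrite qexp_logder_qint2 qHermiteE.
by field; rewrite qfact_neq0 ?qint_neq0.
Qed.

End QHermiteRecurrence.

Theorem mainTheorem4 (R : realFieldType) (q : R) (hq : 1 < q) (x : R) (N : nat)
    (hN : (1 <= N)%N) :
  qHermite q x N.+1 =
    qint q N.+1 / N.+1%:R *
    (qint q 2 * x * qHermite q x N
     - 2 * qint q N * qHermite q x N.-1
     - (q - 1) * qint q 2 * qint q N * x ^+ 2 * qHermite q x N.-1
     + qint q 2 * qfact q N *
       \sum_(0 <= k < N.-1)
          ((1 - q ^+ 2) ^+ (N - k) * x ^+ (N - k).+1 * qHermite q x k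
           / (qfact q k * qint q (N - k).+1))).
Proof.
have q_gt0 : 0 < q := lt_trans ltr01 hq.
have q_neq1 : q != 1 by rewrite gt_eqF.
case: N hN => [//|M] _ /=.
rewrite qHermite_tail_sum // !qHermiteE.
have rec := exp_mt2_qexp_euler q_gt0 q_neq1 (qint q 2 * x) M.
set g := fps_mul (exp_mt2 R) (eq_scaled q (qint q 2 * x)) in rec *.
rewrite (fps_mul_recr2 g) !qexp_logder_qint2 // in rec.
move/(canRL (mulKf (lt0r_neq0 (ltr0Sn _ M.+1)))): rec => ->.
have nz2 := qint_neq0 q_gt0 q_neq1 (ltn0Sn 1).
rewrite !qfactS (qint1 q_neq1) (qint2 q_neq1) in nz2 *.
by field; rewrite nz2 -natrD pnatr_eq0.
Qed.
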